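(* Let $a,b>0$ and let $f,g:\mathbb{R}\to(0,\infty)$. If both $f(x)$ and $g(x)/f(x)$ are monotonically increasing in $x$, then for any $x_1<x_2$, $$\frac{b+g(x_1)}{a+f(x_1)}\le\frac ba\vee\frac{b+g(x_2)}{a+f(x_2)}.$$ Provided that $\lim_{x\to\infty}(b+g(x))/(a+f(x))$ exists, for any $x_0\in\mathbb{R}$, $$\frac{b+g(x_0)}{a+f(x_0)}\le\frac ba\vee\lim_{x\to\infty}\frac{b+g(x)}{a+f(x)}.$$
   Context: $u\vee v=\max(u,v)$; ''monotonically increasing'' means non-decreasing. *)

From HB Require Import structures.
From mathcomp Require Import all_boot all_order all_algebra.
From mathcomp Require Import all_classical all_reals all_analysis.

From HB Require Import structures.
From mathcomp Require Import all_boot all_order all_algebra.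
From mathcomp Require Import all_classical all_reals all_analysis.
From mathcomp Require Import lra.
Import Order.TTheory GRing.Theory Num.Theory.
Import numFieldNormedType.Exports.
Local Open Scope ring_scope.
Local Open Scope classical_set_scope.

(* The ratio (b + g)/(a + f) is the mediant of b/a and g/f, so it lies
   between them.  If it is at most b/a there is nothing to prove; otherwise
   g/f > b/a, and in that regime the mediant (b + r f)/(a + f) increases both
   in r = g/f and in f, since moving weight towards the larger fraction r
   raises it.  Hence once the ratio exceeds b/a, it is bounded by every later
   value, and therefore by the limit at infinity. *)

Section Mediant.
Variables (R : realFieldType) (a b : R).
Hypothesis a_gt0 : 0 < a.

Lemma mediant_le_left (r f : R) :
  0 <= f -> a * r <= b -> (b + r * f) / (a + f) <= b / a.
Proof.
move=> f_ge0 ar_le_b.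
rewrite ler_pdivrMr ?ltr_wpDr // mulrAC ler_pdivlMr //.
have : 0 <= (b - a * r) * f by apply: mulr_ge0; lra.
lra.
Qed.

Lemma mediant_le_mono (r1 r2 f1 f2 : R) :
  0 <= f1 -> f1 <= f2 -> r1 <= r2 -> b <= a * r1 ->
  (b + r1 * f1) / (a + f1) <= (b + r2 * f2) / (a + f2).
Proof.
move=> f1_ge0 le_f12 le_r12 b_le_ar1.
have f2_ge0 : 0 <= f2 by apply: le_trans le_f12.
rewrite ler_pdivrMr ?ltr_wpDr // mulrAC ler_pdivlMr ?ltr_wpDr //.
have grow_f : 0 <= (a * r1 - b) * (f2 - f1) by apply: mulr_ge0; lra.
have grow_r : 0 <= (r2 - r1) * (f2 * (a + f1)).
  by rewrite mulr_ge0 ?subr_ge0 // mulr_ge0 // addr_ge0 // ltW.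
lra.
Qed.

Lemma mediant_le_max (r1 r2 f1 f2 : R) :
  0 <= f1 -> f1 <= f2 -> r1 <= r2 ->
  (b + r1 * f1) / (a + f1) <= Num.max (b / a) ((b + r2 * f2) / (a + f2)).
Proof.
move=> f1_ge0 le_f12 le_r12; rewrite le_max.
have [ar1_le_b | b_lt_ar1] := lerP (a * r1) b.
- by rewrite mediant_le_left.
- by rewrite mediant_le_mono ?orbT // ltW.
Qed.

End Mediant.

Lemma le_max_lim_pinfty (R : realFieldType) (c : R) (h : R -> R) :
  (forall x y, x < y -> h x <= Num.max c (h y)) ->
  cvg (h x @[x --> +oo]) ->
  forall x, h x <= Num.max c (lim (h x @[x --> +oo])).
Proof.
move=> h_le_later h_cvg x; rewrite le_max.
have [//|c_lt_hx] := lerP (h x) c.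
apply/orP; right; apply: limr_ge => //.
exists x; split; first exact: num_real.
move=> y /h_le_later; rewrite le_max => /orP[hx_le_c|//].
by rewrite leNgt c_lt_hx in hx_le_c.
Qed.

Theorem lemma11 (R : realType) (a b : R) (f g : R -> R)
  (ha : 0 < a) (hb : 0 < b)
  (hfpos : forall x, 0 < f x) (hgpos : forall x, 0 < g x)
  (hfinc : forall x y, x <= y -> f x <= f y)
  (hgfinc : forall x y, x <= y -> g x / f x <= g y / f y) :
  (forall x1 x2, x1 < x2 ->
     (b + g x1) / (a + f x1) <= Num.max (b / a) ((b + g x2) / (a + f x2)))
  /\
  (cvg ((b + g x) / (a + f x) @[x --> +oo]) ->
   forall x0 : R,
     (b + g x0) / (a + f x0) <=
       Num.max (b / a) (lim ((b + g x) / (a + f x) @[x --> +oo]))).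
Proof.
have gE x : g x = g x / f x * f x by rewrite divfK // gt_eqF.
have ratio_le_max x1 x2 : x1 < x2 ->
    (b + g x1) / (a + f x1) <= Num.max (b / a) ((b + g x2) / (a + f x2)).
  move=> /ltW le_x12; rewrite (gE x1) (gE x2).
  by apply: mediant_le_max; [| exact/ltW | exact: hfinc | exact: hgfinc].
by split=> //; apply: le_max_lim_pinfty.
Qed.
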